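(* Let the universe be $\mathbb{Z}$ and let $\mathcal{C}$ be the collection consisting of the languages $\{1,2,\ldots,100\}\cup\mathbb{Z}_{\ge i}$ for all $i\in\mathbb{Z}$, where $\mathbb{Z}_{\ge i}=\{i,i+1,i+2,\ldots\}$. There is no algorithm that non-uniformly generates from $\mathcal{C}$ and whose generation times form a Pareto-optimal sequence.
   Context: Index the languages of $\mathcal{C}$ as $L_1,L_2,\ldots$ by any enumeration without repetition. An enumeration of a language $L$ is a sequence $x_1,x_2,\ldots$ with every $x_t\in L$ and every $x\in L$ equal to some $x_t$. A generating algorithm at each time $t\ge1$ receives $x_1,\ldots,x_t$ and outputs $z_t$; $S_t$ is the set of distinct strings among $x_1,\ldots,x_t$. An algorithm $\mathcal{G}$ non-uniformly generates from $\mathcal{C}$ if for every $i$ there is a finite $t(L_i)$ such that for every enumeration of $L_i$, $z_t\in L_i\setminus S_t$ whenever $|S_t|\ge t(L_i)$; its generation time $t_{\mathcal{G}}(L_i)$ is the least such value ($\infty$ if none). A sequence $t(L_1),t(L_2),\ldots$ is Pareto-optimal if every algorithm $\mathcal{G}$ that non-uniformly generates from $\mathcal{C}$ and satisfies $t_{\mathcal{G}}(L_i)<t(L_i)$ for some $i$ also satisfies $t_{\mathcal{G}}(L_j)>t(L_j)$ for some other $j$. *)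

From mathcomp Require Import all_boot all_order all_algebra.
From mathcomp Require Import boolp.
Set Implicit Arguments. Unset Strict Implicit. Unset Printing Implicit Defensive.
Import Order.TTheory GRing.Theory Num.Theory.
Local Open Scope ring_scope.

Definition language := int -> Prop.

(* The languages of C : L i = {1,...,100} \cup Z_{>= i}, for i : int.
   (Several indices give the same language.) *)
Definition Lang (i : int) : language :=
  fun z => (1 <= z <= 100) \/ (i <= z).

Definition algorithm := seq int -> int.

(* x : nat -> int, with x k playing the role of x_{k+1}, is an enumeration of L. *)
Definition enumeration (L : language) (x : nat -> int) : Prop :=
  (forall k, L (x k)) /\ (forall z, L z -> exists k, x k = z).

Definition prefix (x : nat -> int) (t : nat) : seq int := [seq x k | k <- iota 0 t].

Definition S_t (x : nat -> int) (t : nat) : seq int := undup (prefix x t).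

Definition generates_after (G : algorithm) (L : language) (n : nat) : Prop :=
  forall x, enumeration L x ->
  forall t : nat, (1 <= t)%N -> (n <= size (S_t x t))%N ->
    L (G (prefix x t)) /\ G (prefix x t) \notin S_t x t.

Definition nonuniform_generates (G : algorithm) : Prop :=
  forall i : int, exists n : nat, generates_after G (Lang i) n.

Lemma ex_asbool (P : nat -> Prop) : (exists n, P n) -> exists n, `[< P n >].
Proof. by case=> n Pn; exists n; apply/asboolP. Qed.

(* generation time t_G(L): least working threshold, None standing for infinity *)
Definition gen_time (G : algorithm) (L : language) : option nat :=
  match pselect (exists n, generates_after G L n) with
  | left h => Some (ex_minn (ex_asbool h))
  | right _ => None
  end.

Definition ext_lt (a b : option nat) : Prop :=
  match a, b with
  | Some m, Some n => (m < n)%N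
  | Some _, None => True
  | None, _ => False
  end.

Definition pareto_optimal (tm : int -> option nat) : Prop :=
  forall G' : algorithm, nonuniform_generates G' ->
  forall i : int, ext_lt (gen_time G' (Lang i)) (tm i) ->
  exists j : int, ~ (forall z, Lang j z <-> Lang i z) /\
    ext_lt (tm j) (gen_time G' (Lang j)).

From Pilot Require Import Defs.
From mathcomp Require Import all_boot all_order all_algebra.
From mathcomp Require Import boolp zify.
Set Implicit Arguments. Unset Strict Implicit. Unset Printing Implicit Defensive.
Import Order.TTheory GRing.Theory Num.Theory.
Local Open Scope ring_scope.

(* Given G and i, let G' answer max (G p) i 101 on "saturated" inputs p,
   made of exactly the strings 1, ..., 100: this answer is fresh, lies in
   L_i, and lies in L_j whenever G's answer does.  On every other input G'
   answers safely for all languages of the class (an unseen small string,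
   or one more than the largest string seen), and an input with 101
   distinct strings is never saturated, so G' needs no threshold beyond
   101.  Taking i = |G(1..100)| + 1, G' generates L_i from the start while
   G cannot (its answer g to 1, ..., 100 would satisfy g >= |g| + 1); and
   if G is faster than G' on some L_j, it is correct on every saturated
   input, hence so is G', whose time on L_j is then 0. *)

Definition sample (L : language) (p : seq int) : Prop := forall z, z \in p -> L z.

Definition cat_enum (p : seq int) (e : nat -> int) (k : nat) : int :=
  nth (e (k - size p)%N) p k.

Lemma prefix_cat_enum p e : Defs.prefix (cat_enum p e) (size p) = p.
Proof.
rewrite /Defs.prefix -[RHS](mkseq_nth 0 p) /mkseq; apply/eq_in_map => k.
by rewrite mem_iota add0n => /andP[_ ltkp]; apply: set_nth_default.
Qed.

Lemma enumeration_cat L p e :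
  sample L p -> enumeration L e -> enumeration L (cat_enum p e).
Proof.
move=> Lp [Le e_onto]; split=> [k | z /e_onto[k <-]].
  rewrite /cat_enum; case: (ltnP k (size p)) => [ltkp | lepk].
    exact/Lp/mem_nth.
  by rewrite nth_default.
by exists (size p + k)%N; rewrite /cat_enum nth_default ?leq_addr // addKn.
Qed.

Lemma mem_prefix x t z : z \in Defs.prefix x t -> exists k, x k = z.
Proof. by case/mapP => k _ ->; exists k. Qed.

Lemma generates_after_of_samples G L n :
  (forall p, sample L p -> (n <= size (undup p))%N -> L (G p) /\ G p \notin p) ->
  generates_after G L n.
Proof.
move=> Gsamples x [Lx _] t _ le_n; rewrite /S_t mem_undup.
by apply: Gsamples le_n => z /mem_prefix[k <-].
Qed.

Lemma generates_after_sample G L n e p :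
  generates_after G L n -> enumeration L e -> sample L p ->
  (0 < size p)%N -> (n <= size (undup p))%N -> L (G p) /\ G p \notin p.
Proof.
move=> GL Le Lp p_gt0 le_n.
have := GL _ (enumeration_cat Lp Le) _ p_gt0.
by rewrite /S_t prefix_cat_enum mem_undup; apply.
Qed.

Lemma gen_time_le G L n :
  generates_after G L n -> exists2 m, gen_time G L = Some m & (m <= n)%N.
Proof.
move=> GL; rewrite /gen_time; case: pselect => [h | []]; last by exists n.
by case: ex_minnP => m _ min_m; exists m => //; apply/min_m/asboolP.
Qed.

Lemma gen_time0 G L : generates_after G L 0 -> gen_time G L = Some 0%N.
Proof. by case/gen_time_le => m ->; rewrite leqn0 => /eqP->. Qed.

Lemma gen_time_Some G L m : gen_time G L = Some m -> generates_after G L m.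
Proof.
by rewrite /gen_time; case: pselect => // h [<-]; case: ex_minnP => m' /asboolP.
Qed.

Definition small (z : int) : bool := 1 <= z <= 100.

Definition smalls : seq int := [seq Posz k | k <- iota 1 100].

Lemma mem_smalls z : (z \in smalls) = small z.
Proof.
rewrite /small; apply/mapP/idP => [[k] | z_small].
  by rewrite mem_iota => k_range ->; lia.
by exists `|z|%N; rewrite ?mem_iota; lia.
Qed.

Lemma uniq_smalls : uniq smalls.
Proof. by rewrite map_inj_uniq ?iota_uniq // => a b []. Qed.

Lemma size_smalls : size smalls = 100%N.
Proof. by rewrite size_map size_iota. Qed.

Lemma size_undup_small p : all small p -> (size (undup p) <= 100)%N.
Proof.
move=> /allP p_small; rewrite -size_smalls uniq_leq_size ?undup_uniq //.
by move=> z; rewrite mem_undup mem_smalls => /p_small.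
Qed.

Lemma Lang_small j z : small z -> Lang j z.
Proof. by left. Qed.

Definition enum_Lang (j : int) (k : nat) : int :=
  if (k < 100)%N then Posz k.+1 else j + Posz (k - 100).

Lemma enumeration_Lang j : enumeration (Lang j) (enum_Lang j).
Proof.
split=> [k | z [z_small | le_jz]]; rewrite /enum_Lang.
- by case: ifP => lt_k100; [left | right]; lia.
- by exists `|z - 1|%N; rewrite ifT; lia.
- by exists (100 + `|z - j|)%N; rewrite ltnNge leq_addr /=; lia.
Qed.

Definition saturated (p : seq int) : bool :=
  all small p && (100 <= size (undup p))%N.

Lemma saturated_memE p z : saturated p -> (z \in p) = small z.
Proof.
case/andP => /allP p_small sz_p.
have sub : {subset undup p <= smalls}.
  by move=> y; rewrite mem_undup mem_smalls => /p_small.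
have le_size : (size smalls <= size (undup p))%N by rewrite size_smalls.
have [_ /(_ z)] := uniq_min_size (undup_uniq p) sub le_size.
by rewrite mem_undup mem_smalls.
Qed.

Lemma sample_saturated j p : saturated p -> sample (Lang j) p.
Proof. by case/andP => /allP p_small _ z /p_small /Lang_small. Qed.

Lemma saturated_smalls : saturated smalls.
Proof. by rewrite /saturated undup_id ?uniq_smalls // size_smalls andbT. Qed.

Lemma Lang_notin_saturated j p z : saturated p -> Lang j z -> z \notin p -> j <= z.
Proof. by move=> sat_p [small_z | //]; rewrite saturated_memE // => /negP[]. Qed.

Definition max_seq (p : seq int) : int := foldr Num.max 0 p.

Lemma le_max_seq p z : z \in p -> z <= max_seq p.
Proof. by elim: p => //= y p IHp; rewrite in_cons => /orP[/eqP-> | /IHp]; lia. Qed.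

Lemma max_seq_add1_notin p : max_seq p + 1 \notin p.
Proof. by apply/negP => /le_max_seq; lia. Qed.

Lemma Lang_max_seq_add1 j p z : sample (Lang j) p -> z \in p -> ~~ small z ->
  Lang j (max_seq p + 1).
Proof.
move=> Lp p_z /negP z_big; right.
have [? | jz] := Lp z p_z; first by case: z_big.
by have := le_max_seq p_z; lia.
Qed.

Definition fresh_small (p : seq int) : int := head 0 [seq z <- smalls | z \notin p].

Lemma fresh_smallP p :
  (size (undup p) < 100)%N -> small (fresh_small p) /\ fresh_small p \notin p.
Proof.
move=> sz_p; rewrite /fresh_small.
case E: [seq z <- smalls | z \notin p] => [|a s] /=.
  have sub : {subset smalls <= undup p}.
    move=> z z_small; rewrite mem_undup; apply: contraT => z_p.
    by have := mem_filter (fun z => z \notin p) z smalls; rewrite E z_p z_small.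
  by have := uniq_leq_size uniq_smalls sub; rewrite size_smalls leqNgt sz_p.
have : a \in [seq z <- smalls | z \notin p] by rewrite E mem_head.
by rewrite mem_filter mem_smalls => /andP[-> ->].
Qed.

Definition improve (G : algorithm) (i : int) : algorithm := fun p =>
  if saturated p then Num.max (G p) (Num.max i 101)
  else if all small p then fresh_small p
  else max_seq p + 1.

Lemma improve_unsaturated G i j p :
  sample (Lang j) p -> ~~ saturated p ->
  Lang j (improve G i p) /\ improve G i p \notin p.
Proof.
move=> Lp unsat_p; rewrite /improve (negbTE unsat_p).
case: ifP => [p_small | /negbT/allPn[z p_z z_big]].
  have [|small_f f_notin] := @fresh_smallP p; last by split; first exact: Lang_small.
  by move: unsat_p; rewrite /saturated p_small -ltnNge.
by split; [exact: Lang_max_seq_add1 p_z z_big | exact: max_seq_add1_notin].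
Qed.

Lemma improve_generates101 G i j : generates_after (improve G i) (Lang j) 101.
Proof.
apply: generates_after_of_samples => p Lp sz_p; apply: improve_unsaturated => //.
by apply: contraTN sz_p => /andP[/size_undup_small]; lia.
Qed.

Lemma improve_generates0 G i j :
  (forall p, saturated p -> j <= Num.max (G p) i) ->
  generates_after (improve G i) (Lang j) 0.
Proof.
move=> le_j; apply: generates_after_of_samples => p Lp _.
have [sat_p | unsat_p] := boolP (saturated p); last exact: improve_unsaturated.
have := le_j p sat_p; rewrite /improve sat_p saturated_memE // /small => ?.
by split; [right | ]; lia.
Qed.

Lemma improve_time_self G i : gen_time (improve G i) (Lang i) = Some 0%N.
Proof. by apply/gen_time0/improve_generates0 => p _; lia. Qed.

Lemma gen_time_self_neq0 G : gen_time G (Lang (`|G smalls| + 1)) <> Some 0%N.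
Proof.
move/gen_time_Some => G0.
have [|LG G_fresh] := generates_after_sample G0 (enumeration_Lang _)
  (sample_saturated _ saturated_smalls) _ (leq0n _); first by rewrite size_smalls.
by have := Lang_notin_saturated saturated_smalls LG G_fresh; lia.
Qed.

Lemma improve_no_slower G i j :
  ~ ext_lt (gen_time G (Lang j)) (gen_time (improve G i) (Lang j)).
Proof.
have [m Em le_m101] := gen_time_le (@improve_generates101 G i j).
case Ek: (gen_time G (Lang j)) => [k|] //; rewrite Em /= => lt_km.
suff : gen_time (improve G i) (Lang j) = Some 0%N by rewrite Em => -[m0]; rewrite m0 in lt_km.
apply/gen_time0/improve_generates0 => p sat_p.
have [||LGp Gp_fresh] := generates_after_sample (gen_time_Some Ek) (enumeration_Lang j)
  (sample_saturated j sat_p); first by case: p sat_p.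
  by case/andP: sat_p => _; lia.
by have := Lang_notin_saturated sat_p LGp Gp_fresh; lia.
Qed.

Theorem mainTheorem5 :
  ~ (exists G : algorithm,
       nonuniform_generates G /\ pareto_optimal (fun i => gen_time G (Lang i))).
Proof.
case=> G [_ G_pareto].
pose i : int := `|G smalls| + 1.
have improve_nonuniform : nonuniform_generates (improve G i).
  by move=> j; exists 101%N; apply: improve_generates101.
have improve_faster : ext_lt (gen_time (improve G i) (Lang i)) (gen_time G (Lang i)).
  by rewrite improve_time_self; move: (@gen_time_self_neq0 G); case: gen_time => [[]|].
have [j [_]] := G_pareto _ improve_nonuniform i improve_faster.
exact: improve_no_slower.
Qed.
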